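(* Let $d\in\mathbb N$. Then: (1) for each $j=1,\dots,d$ and each bounded linear operator $T:C_0(\mathbb R)\to C_0(\mathbb R)$ there is a unique bounded linear operator $\mathcal T^j:C_0(\mathbb R^d)\to C_0(\mathbb R^d)$ such that for every $f\in C_0(\mathbb R^d)$ and every $x\in\mathbb R^d$, $$(\mathcal T^jf)(x_1,\dots,x_d)=\bigl(T(f(x_1,\dots,x_{j-1},\cdot,x_{j+1},\dots,x_d))\bigr)(x_j);$$ (2) for each $j$, the map $V_j:T\mapsto\mathcal T^j$ is a continuous homomorphism of the Banach algebra $\mathcal B(C_0(\mathbb R),C_0(\mathbb R))$ into the Banach algebra $\mathcal B(C_0(\mathbb R^d),C_0(\mathbb R^d))$; (3) for all $S,T\in\mathcal B(C_0(\mathbb R),C_0(\mathbb R))$ and all $i\ne j$, $V_i(S)V_j(T)f=V_j(T)V_i(S)f$ for every $f\in C_0(\mathbb R^d)$.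
   Context: $C_0(\mathbb R^d)$ is the Banach space of continuous real functions on $\mathbb R^d$ tending to $0$ at infinity, with the sup norm; $\mathcal B(X,X)$ is the Banach algebra of bounded linear operators on $X$ with the operator norm. *)

From HB Require Import structures.
From mathcomp Require Import all_boot all_order all_algebra.
From mathcomp Require Import all_classical all_reals all_analysis.
Set Implicit Arguments. Unset Strict Implicit. Unset Printing Implicit Defensive.
Import Order.TTheory GRing.Theory Num.Theory.
Import numFieldNormedType.Exports.
Local Open Scope classical_set_scope.
Local Open Scope ring_scope.

Section Defs.
Variable R : realType.

Definition supn (X : Type) (f : X -> R) : R := sup (range (fun x => `|f x|)).

Definition C0 (d : nat) : set ('rV[R]_d -> R) :=
  [set f | continuous f /\
     (forall e : R, 0 < e -> exists M : R, forall x, M < `|x| -> `|f x| < e)].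

Definition C0R : set (R -> R) :=
  [set f | continuous f /\
     (forall e : R, 0 < e -> exists M : R, forall x : R, M < `|x| -> `|f x| < e)].

Definition bdd_op (X : Type) (A : set (X -> R)) (T : (X -> R) -> (X -> R)) : Prop :=
  [/\ (forall f, A f -> A (T f)),
      (forall (a : R) f g, A f -> A g ->
          T (fun x => a * f x + g x) = (fun x => a * T f x + T g x))
    & exists C : R, forall f, A f -> supn (T f) <= C * supn f].

Definition opnorm (X : Type) (A : set (X -> R)) (T : (X -> R) -> (X -> R)) : R :=
  sup [set supn (T f) | f in [set f | A f /\ supn f <= 1]].

Definition op_eq (X : Type) (A : set (X -> R)) (U V : (X -> R) -> (X -> R)) : Prop :=
  forall f, A f -> U f = V f.

Definition op_add (X : Type) (U V : (X -> R) -> (X -> R)) : (X -> R) -> (X -> R) :=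
  fun f x => U f x + V f x.
Definition op_opp (X : Type) (U : (X -> R) -> (X -> R)) : (X -> R) -> (X -> R) :=
  fun f x => - U f x.
Definition op_scale (X : Type) (a : R) (U : (X -> R) -> (X -> R)) : (X -> R) -> (X -> R) :=
  fun f x => a * U f x.

Definition slice (d : nat) (f : 'rV[R]_d -> R) (j : 'I_d) (x : 'rV[R]_d) : R -> R :=
  fun t => f (\row_k (if k == j then t else x 0 k)).

Definition Vop (d : nat) (j : 'I_d) (T : (R -> R) -> (R -> R)) :
  ('rV[R]_d -> R) -> ('rV[R]_d -> R) :=
  fun f x => T (slice f j x) (x 0 j).

End Defs.

From HB Require Import structures.
From mathcomp Require Import all_boot all_order all_algebra.
From mathcomp Require Import all_classical all_reals all_analysis.
From mathcomp Require Import lra ring.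
Set Implicit Arguments. Unset Strict Implicit. Unset Printing Implicit Defensive.
Import Order.TTheory GRing.Theory Num.Theory.
Import numFieldNormedType.Exports.
Local Open Scope classical_set_scope.
Local Open Scope ring_scope.

(* [V_j(T)] is linear, and [|V_j(T) f| <= |T| |f|] holds slice by slice because
   every slice of [f] lies in [C_0(R)] with sup norm at most that of [f]; applied
   to [S - T] this gives the continuity of [T |-> V_j(T)], and multiplicativity
   holds because the [j]-th slice of [V_j(T) f] is [T] applied to the [j]-th
   slice of [f].  What needs an argument is that [V_j(T) f] lies in [C_0(R^d)]
   again, and the commutation.  For both, approximate [f] uniformly by its
   piecewise-linear interpolation in [x_j], [sum_k f(x[x_j := c_k]) phi_k(x_j)],
   with hat functions [phi_k] at the nodes [c_k] of [del Z] in [[-N del, N del]].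
   On it [V_j(T)] acts as [sum_k f(x[x_j := c_k]) (T phi_k)(x_j)], which is
   visibly in [C_0], whereas [V_i(S)], [i != j], only acts on the factors
   [f(x[x_j := c_k])], so [V_i(S)] and [V_j(T)] commute there.  Since [V_j(T)] is
   Lipschitz for the sup norm and [C_0] is uniformly closed, both properties
   pass to [f]. *)

Section row_update.
Variables (T : Type) (d : nat).
Implicit Types (x : 'rV[T]_d) (i j l : 'I_d).

Definition row_upd x j (c : T) : 'rV[T]_d := \row_k (if k == j then c else x 0 k).

Lemma row_upd_same x j c : row_upd x j c 0 j = c.
Proof. by rewrite mxE eqxx. Qed.

Lemma row_upd_other x j c l : l != j -> row_upd x j c 0 l = x 0 l.
Proof. by move=> /negbTE lj; rewrite mxE lj. Qed.

Lemma row_upd_upd x j t c : row_upd (row_upd x j t) j c = row_upd x j c.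
Proof. by apply/rowP => l; rewrite !mxE; case: eqP. Qed.

Lemma row_updC x i j s c : i != j ->
  row_upd (row_upd x i s) j c = row_upd (row_upd x j c) i s.
Proof.
move=> ij; apply/rowP => l; rewrite !mxE.
by case: (eqVneq l j) => [->|//]; rewrite eq_sym (negbTE ij).
Qed.

Lemma row_upd_id x j : row_upd x j (x 0 j) = x.
Proof. by apply/rowP => l; rewrite mxE; case: eqP => // ->. Qed.

End row_update.

Section row_norm.
Variables (R : realDomainType) (d : nat).
Implicit Types (x y : 'rV[R]_d) (j l : 'I_d).

Lemma normr_coord_le x l : `|x 0 l| <= `|x|.
Proof. by rewrite [leRHS]/Num.Def.normr /= mx_normrE (le_bigmax _ _ (0, l)). Qed.

Lemma normr_row_le x B : 0 <= B -> (forall l, `|x 0 l| <= B) -> `|x| <= B.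
Proof.
move=> B0 xB; rewrite /Num.Def.normr /= mx_normrE.
by apply/bigmax_leP; split=> // -[i l] _; rewrite (ord1 i).
Qed.

Lemma normr_row_gt x M : 0 <= M -> M < `|x| -> exists l, M < `|x 0 l|.
Proof.
move=> M0 Mx; apply: contrapT => noM; move: Mx; apply/negP; rewrite -leNgt.
by apply: normr_row_le => // l; rewrite leNgt; apply/negP => Ml; apply: noM; exists l.
Qed.

Lemma row_upd_dist_coord x j t s : `|row_upd x j t - row_upd x j s| <= `|t - s|.
Proof.
apply: normr_row_le => // l; rewrite !mxE.
by case: eqP => _ //; rewrite subrr normr0.
Qed.

Lemma row_upd_dist_row x y j c : `|row_upd x j c - row_upd y j c| <= `|x - y|.
Proof.
apply: normr_row_le => // l; rewrite !mxE; case: eqP => _; first by rewrite subrr normr0.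
by rewrite (le_trans _ (normr_coord_le _ l)) // !mxE.
Qed.

End row_norm.

Lemma lipschitz_continuous (R : realFieldType) (V W : normedModType R)
    (h : V -> W) (k : R) :
  (forall a b, `|h a - h b| <= k * `|a - b|) -> continuous h.
Proof.
move=> hk x; apply/cvgrPdist_lt => e e0.
have k1 : 0 < `|k| + 1 by rewrite ltr_pwDr.
near=> y; have : `|x - y| * (`|k| + 1) < e.
  rewrite -ltr_pdivlMr //; near: y.
  exact: (@cvgr_dist_lt _ _ _ _ _ id x (@cvg_id _ _) _ (divr_gt0 e0 k1)).
have := hk x y; have := ler_norm k; have := normr_ge0 (x - y); nra.
Unshelve. all: by end_near.
Qed.

Section sup_norm.
Variables (R : realType) (X : Type).
Implicit Types (f : X -> R) (B : R).

Lemma supn_ub f B x : (forall y, `|f y| <= B) -> `|f x| <= supn f.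
Proof.
by move=> fB; apply: ub_le_sup; [exists B => _ [y _ <-]; exact: fB | exists x].
Qed.

Lemma supn_le f B (x0 : X) : (forall y, `|f y| <= B) -> supn f <= B.
Proof.
by move=> fB; apply: ge_sup; [exists `|f x0|, x0 | move=> _ [y _ <-]; exact: fB].
Qed.

End sup_norm.

Lemma compact_unif_continuous (R : realType) (V : normedModType R)
    (K : set V) (f : V -> R) :
  compact K -> continuous f -> forall e : R, 0 < e ->
  exists2 del : R, 0 < del & forall x y, K x -> `|x - y| < del -> `|f x - f y| < e.
Proof.
move=> cK cf e e0; have e2 : 0 < e / 2 by rewrite divr_gt0.
have : \forall del \near 0^'+,
    K `<=` [set x | forall y, `|x - y| < del -> `|f x - f y| < e].
  apply: ((compact_near_coveringP K).1 cK _ (0^'+)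
    (fun del x => forall y, `|x - y| < del -> `|f x - f y| < e)) => x Kx.
  have /cvgrPdist_lt/(_ _ e2)/nbhs_ballP[eta /= eta0 feta] := cf x.
  have eta2 : 0 < eta / 2 by rewrite divr_gt0.
  near=> x' del => y /= xy.
  have : ball x (eta / 2) x' by near: x'; exact: near_ball.
  rewrite -ball_normE /ball_ /= => xx'.
  have del2 : del < eta / 2 by near: del; exact: nbhs_right_lt.
  have fx' : `|f x - f x'| < e / 2.
    by apply: feta; rewrite -ball_normE /ball_ /= (lt_trans xx') // ltr_pdivrMr //; lra.
  have fy : `|f x - f y| < e / 2.
    by apply: feta; rewrite -ball_normE /ball_ /=; have := ler_distD x' x y; lra.
  by have := ler_distD (f x) (f x') (f y); rewrite distrC in fx'; lra.
move=> Kdel; have /filter_ex[del [del0 Kdel']] : \forall del \near 0^'+, 0 < del /\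
    K `<=` [set x | forall y, `|x - y| < del -> `|f x - f y| < e].
  by near=> del; split; [near: del; exact: nbhs_right_gt | near: del; exact: Kdel].
by exists del => // x y /Kdel'; apply.
Unshelve. all: by end_near.
Qed.

Section vanishing_at_infinity.
Variables (R : realType) (V : normedModType R).
Implicit Types (f g : V -> R).

(* [C0 d] and [C0R] are convertible to [C0V] on ['rV[R]_d] and on [R]. *)
Definition C0V : set (V -> R) := [set f | continuous f /\
  (forall e : R, 0 < e -> exists M : R, forall x, M < `|x| -> `|f x| < e)].

Lemma C0V0 : C0V (fun=> 0).
Proof. by split=> [x|e e0]; [exact: cvg_cst | exists 0 => x _; rewrite normr0]. Qed.

Lemma C0V_lin a f g : C0V f -> C0V g -> C0V (fun x => a * f x + g x).
Proof.
move=> [cf vf] [cg vg]; split=> [x|e e0].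
  by apply: cvgD; [apply: cvgM; [exact: cvg_cst | exact: cf] | exact: cg].
have a1 : 0 < `|a| + 1 by rewrite ltr_pwDr.
have [M1 fM1] := vf _ (divr_gt0 (divr_gt0 e0 (ltr0Sn _ 1)) a1).
have [M2 gM2] := vg _ (divr_gt0 e0 (ltr0Sn _ 1)).
exists (Num.max M1 M2) => x; rewrite gt_max => /andP[/fM1 fx /gM2 gx].
move: fx; rewrite ltr_pdivlMr // => fx.
apply: le_lt_trans (ler_normD _ _) _; rewrite normrM.
have := normr_ge0 (f x); have := normr_ge0 a; nra.
Qed.

Lemma C0V_scale a f : C0V f -> C0V (fun x => a * f x).
Proof. by move=> /(C0V_lin a)/(_ C0V0); under eq_fun do rewrite addr0. Qed.

Lemma C0V_sum n (F : nat -> V -> R) :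
  (forall k, C0V (F k)) -> C0V (fun x => \sum_(k < n) F k x).
Proof.
move=> CF; elim: n => [|n IH].
  by under eq_fun do rewrite big_ord0; exact: C0V0.
under eq_fun do rewrite big_ord_recr /= addrC -[F n _]mul1r.
exact: C0V_lin.
Qed.

Lemma C0V_uniform_closed g :
  (forall e : R, 0 < e -> exists2 h, C0V h & forall x, `|g x - h x| <= e) -> C0V g.
Proof.
move=> approx; split=> [x|e e0].
  apply/cvgrPdist_lt => e e0; have e3 : 0 < e / 3 by rewrite divr_gt0.
  have [h [ch _] gh] := approx _ e3.
  have /cvgrPdist_lt/(_ _ e3) := ch x; apply: filterS => y hy.
  have := ler_distD (h x) (g x) (g y); have := ler_distD (h y) (h x) (g y).
  have := gh x; have := gh y; rewrite (distrC (h y)); lra.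
have e2 : 0 < e / 2 by rewrite divr_gt0.
have [h [_ vh] gh] := approx _ e2; have [M hM] := vh _ e2.
exists M => x /hM hx; have := gh x; have := ler_distD (h x) (g x) 0.
by rewrite !subr0; lra.
Qed.

Section heine_borel.
Hypothesis closed_ball0_compact : forall r : R, 0 < r -> compact (closed_ball (0 : V) r).

Lemma C0V_bounded f : C0V f -> exists2 B, 0 < B & forall x, `|f x| <= B.
Proof.
move=> [cf vf]; have [M fM] := vf 1 ltr01.
have r0 : 0 < `|M| + 1 by rewrite ltr_pwDr.
have /compact_bounded[B [_ fB]] : compact (f @` closed_ball 0 (`|M| + 1)).
  apply: continuous_compact; first exact: continuous_subspaceT.
  exact: closed_ball0_compact.
exists (`|B| + 1) => [|x]; first by rewrite ltr_pwDr.
have [xM|xM] := leP `|x| (`|M| + 1).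
  apply: fB; first by have := ler_norm B; lra.
  by exists x => //; rewrite closed_ballE // /closed_ball_ /= sub0r normrN.
have /fM : M < `|x| by have := ler_norm M; lra.
by have := normr_ge0 B; lra.
Qed.

Lemma C0V_unif_continuous f : C0V f -> forall e : R, 0 < e ->
  exists2 del : R, 0 < del & forall x y, `|x - y| < del -> `|f x - f y| < e.
Proof.
move=> [cf vf] e e0; have e2 : 0 < e / 2 by rewrite divr_gt0.
have [M fM] := vf _ e2; have r0 : 0 < `|M| + 1 by rewrite ltr_pwDr.
have [del del0 fdel] := compact_unif_continuous (closed_ball0_compact r0) cf e0.
exists (Num.min del 1) => [|x y]; first by rewrite lt_min del0 ltr01.
rewrite lt_min => /andP[xydel xy1]; have [xM|xM] := leP `|x| (`|M| + 1).
  by apply: fdel; rewrite // closed_ballE // /closed_ball_ /= sub0r normrN.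
have := ler_distD y x 0; rewrite !subr0 => xyy.
have /fM fx : M < `|x| by have := ler_norm M; lra.
have /fM fy : M < `|y| by have := ler_norm M; lra.
by have := ler_normB (f x) (f y); lra.
Qed.

End heine_borel.

End vanishing_at_infinity.

Section coordinatewise.
Variables (R : realType) (d : nat).
Implicit Types (f : 'rV[R]_d -> R) (g : R -> R) (x : 'rV[R]_d) (j : 'I_d).

Lemma closed_ball0_compact_rV (r : R) : 0 < r -> compact (closed_ball (0 : 'rV[R]_d) r).
Proof.
move=> r0; apply: bounded_closed_compact; last exact: closed_ball_closed.
exists r; split=> [|M rM x]; first by rewrite realE ltW.
by rewrite closed_ballE // /closed_ball_ /= sub0r normrN => /le_trans->//; exact: ltW.
Qed.

Lemma C0_bounded f : C0 f -> exists2 B, 0 < B & forall x, `|f x| <= B.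
Proof. exact: C0V_bounded closed_ball0_compact_rV f. Qed.

Lemma C0R_bounded g : C0R g -> exists2 B, 0 < B & forall t, `|g t| <= B.
Proof. exact: C0V_bounded (@closed_ballR_compact R 0) g. Qed.

Lemma supn_C0R_ge0 (g : R -> R) : C0R g -> 0 <= supn g.
Proof. by move=> /C0R_bounded[B _ gB]; exact: le_trans (supn_ub 0 gB). Qed.

Lemma sliceE f j x t : slice f j x t = f (row_upd x j t).
Proof. by []. Qed.

Lemma slice_row_upd f j x t : slice f j (row_upd x j t) = slice f j x.
Proof. by apply: funext => s; rewrite !sliceE row_upd_upd. Qed.

Lemma slice_C0R f j x : C0 f -> C0R (slice f j x).
Proof.
move=> [cf vf]; split=> [t|e e0].
  apply: continuous_comp (cf _).
  by apply: (@lipschitz_continuous _ _ _ _ 1) => a b; rewrite mul1r row_upd_dist_coord.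
have [M fM] := vf e e0; exists M => t Mt; rewrite sliceE; apply: fM.
by rewrite (lt_le_trans Mt) // -{1}(row_upd_same x j t) normr_coord_le.
Qed.

Lemma supn_slice_le f j x : C0 f -> supn (slice f j x) <= supn f.
Proof.
by move=> /C0_bounded[B _ fB]; apply: (supn_le 0) => t; rewrite sliceE; exact: supn_ub fB.
Qed.

Lemma C0_mul_coord f g j c : C0 f -> C0R g ->
  C0 (fun x => f (row_upd x j c) * g (x 0 j)).
Proof.
move=> Cf Cg; have [Bf Bf0 fBf] := C0_bounded Cf; have [Bg Bg0 gBg] := C0R_bounded Cg.
case: Cf Cg => [cf vf] [cg vg]; split=> [x|e e0].
  apply: continuousM.
    apply: continuous_comp (cf _).
    by apply: (@lipschitz_continuous _ _ _ _ 1) => a b; rewrite mul1r row_upd_dist_row.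
  exact: (continuous_comp (@coord_continuous R 1 d 0 j x) (cg _)).
have [Mg gMg] := vg _ (divr_gt0 e0 Bf0); have [Mf fMf] := vf _ (divr_gt0 e0 Bg0).
have M0 : 0 <= Num.max 0 (Num.max Mg Mf) by rewrite le_max lexx.
exists (Num.max 0 (Num.max Mg Mf)) => x /(normr_row_gt M0)[l].
rewrite !gt_max normrM => /and3P[_ /gMg gx fx]; have [<-|lj] := eqVneq l j.
  move: gx; rewrite ltr_pdivlMr // => gx.
  by apply: le_lt_trans gx; rewrite mulrC ler_wpM2l.
have {fx}/fMf : Mf < `|row_upd x j c|.
  by rewrite (lt_le_trans fx) // -(row_upd_other x c lj) normr_coord_le.
rewrite ltr_pdivlMr // => fx; apply: le_lt_trans fx.
exact: ler_wpM2l.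
Qed.

End coordinatewise.

Section bounded_operators.
Variables (R : realType) (T : (R -> R) -> (R -> R)).
Hypothesis bT : bdd_op (@C0R R) T.

Lemma bdd_op_bound :
  exists2 C, 0 <= C & forall g, C0R g -> forall t, `|T g t| <= C * supn g.
Proof.
case: bT => C0T _ [C TC]; exists (Num.max C 0) => [|g Cg t].
  by rewrite le_max lexx orbT.
have [B _ TgB] := C0R_bounded (C0T _ Cg).
apply: le_trans (supn_ub t TgB) _; apply: le_trans (TC _ Cg) _.
by rewrite ler_wpM2r ?supn_C0R_ge0 // le_max lexx.
Qed.

Lemma bdd_op0 : T (fun=> 0) = fun=> 0.
Proof.
case: bT => _ linT _; have := linT (-1) _ _ (@C0V0 R R) (@C0V0 R R).
under [fun x => _ + 0]eq_fun do rewrite mulr0 addr0.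
by move=> ->; apply: funext => t; rewrite mulN1r addNr.
Qed.

Lemma bdd_op_sum n (a : nat -> R) (g : nat -> R -> R) : (forall k, C0R (g k)) ->
  T (fun t => \sum_(k < n) a k * g k t) = fun t => \sum_(k < n) a k * T (g k) t.
Proof.
move=> Cg; elim: n => [|n IH].
  under eq_fun do rewrite big_ord0.
  by rewrite bdd_op0; apply: funext => t; rewrite big_ord0.
under eq_fun do rewrite big_ord_recr /= addrC.
case: bT => _ linT _; rewrite linT //; last first.
  by apply: (@C0V_sum R R n (fun k t => a k * g k t)) => k; exact: C0V_scale (Cg k).
by rewrite IH; apply: funext => t; rewrite big_ord_recr /= addrC.
Qed.

Lemma bdd_op_lipschitz : exists2 C, 0 <= C & forall g h (eta : R), C0R g -> C0R h ->
  (forall t, `|g t - h t| <= eta) -> forall t, `|T g t - T h t| <= C * eta.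
Proof.
have [C C0 TC] := bdd_op_bound; exists C => // g h eta Cg Ch gh t.
case: bT => _ linT _; have Chg : C0R (fun x => -1 * h x + g x) by exact: C0V_lin.
have -> : T g t - T h t = T (fun x => -1 * h x + g x) t by rewrite linT // mulN1r addrC.
apply: le_trans (TC _ Chg t) _; rewrite ler_wpM2l //.
by apply: (supn_le 0) => y; rewrite mulN1r addrC.
Qed.

End bounded_operators.

Section hat_functions.
Variable R : realType.
Implicit Types (s t del : R) (N k : nat).

Definition clamp01 s : R := Num.min 1 (Num.max 0 s).

(* [ramp del N k] rises from 0 to 1 on [[node del N k - del, node del N k]], so
   [hat del N k] is the hat function of height 1 centred at [node del N k] with
   half-width [del]. *)
Definition ramp del N k t : R := clamp01 (t / del + N%:R + 1 - k%:R).
Definition hat del N k t : R := ramp del N k t - ramp del N k.+1 t.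
Definition node del N k : R := (k%:R - N%:R) * del.

Lemma clamp01_le s t : s <= t -> clamp01 s <= clamp01 t.
Proof. by rewrite /clamp01 !maxEle !minEle; repeat case: ifP; lra. Qed.

Lemma clamp01_ge0 s : 0 <= clamp01 s.
Proof. by rewrite /clamp01 !maxEle !minEle; repeat case: ifP; lra. Qed.

Lemma clamp01_le1 s : clamp01 s <= 1.
Proof. by rewrite /clamp01 !maxEle !minEle; repeat case: ifP; lra. Qed.

Lemma clamp01_le0 s : s <= 0 -> clamp01 s = 0.
Proof. by rewrite /clamp01 !maxEle !minEle; repeat case: ifP; lra. Qed.

Lemma clamp01_ge1 s : 1 <= s -> clamp01 s = 1.
Proof. by rewrite /clamp01 !maxEle !minEle; repeat case: ifP; lra. Qed.

Lemma clamp01_dist s t : `|clamp01 s - clamp01 t| <= `|s - t|.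
Proof.
have := ler_norm (s - t); have := ler_norm (t - s); rewrite distrC ler_norml.
by rewrite /clamp01 !maxEle !minEle; repeat case: ifP; move=> *; apply/andP; split; lra.
Qed.

Lemma ramp_dist del N k s t : 0 < del ->
  `|ramp del N k s - ramp del N k t| <= del^-1 * `|s - t|.
Proof.
move=> del0; apply: le_trans (clamp01_dist _ _) _.
have -> : s / del + N%:R + 1 - k%:R - (t / del + N%:R + 1 - k%:R) = del^-1 * (s - t).
  by rewrite mulrBr ![del^-1 * _]mulrC; ring.
by rewrite normrM ger0_norm // invr_ge0 ltW.
Qed.

Lemma ramp_le del N m n t : (m <= n)%N -> ramp del N n t <= ramp del N m t.
Proof. by move=> mn; apply: clamp01_le; rewrite lerD2l lerN2 ler_nat. Qed.

Lemma hat_ge0 del N k t : 0 <= hat del N k t.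
Proof. by rewrite subr_ge0 ramp_le. Qed.

Lemma hat_neq0 del N k t : 0 < del -> hat del N k t != 0 -> `|t - node del N k| < del.
Proof.
rewrite /hat /ramp -addn1 natrD opprD addrA => del0.
set a := t / del + N%:R + 1 - k%:R => hat_neq0.
have [a0|a0] := leP a 0.
  by move: hat_neq0; rewrite !clamp01_le0 ?subrr ?eqxx //; lra.
have [a2|a2] := leP 2 a.
  by move: hat_neq0; rewrite !clamp01_ge1 ?subrr ?eqxx //; lra.
have -> : t - node del N k = del * (a - 1) by rewrite /a /node; field; lra.
by rewrite normrM ger0_norm ?ltW // gtr_pMr // ltr_norml; lra.
Qed.

Lemma sum_hat del N n t : \sum_(k < n) hat del N k t = ramp del N 0 t - ramp del N n t.
Proof.
elim: n => [|n IH]; first by rewrite big_ord0 subrr.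
by rewrite big_ord_recr /= IH /hat; ring.
Qed.

Lemma sum_hat_ge0 del N n t : 0 <= \sum_(k < n) hat del N k t.
Proof. by rewrite sum_hat subr_ge0 ramp_le. Qed.

Lemma sum_hat_le1 del N n t : \sum_(k < n) hat del N k t <= 1.
Proof.
rewrite sum_hat /ramp; have := clamp01_ge0 (t / del + N%:R + 1 - n%:R).
by have := clamp01_le1 (t / del + N%:R + 1 - 0%:R); lra.
Qed.

Lemma sum_hat_eq1 del N t : 0 < del -> `|t| <= N%:R * del ->
  \sum_(k < (2 * N).+1) hat del N k t = 1.
Proof.
move=> del0; rewrite ler_norml => /andP[tN Nt].
have /andP[Nt' tN'] : - N%:R <= t / del <= N%:R.
  by rewrite ler_pdivlMr // ler_pdivrMr // mulNr tN Nt.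
by rewrite sum_hat /ramp -addn1 natrD natrM clamp01_ge1 ?clamp01_le0; lra.
Qed.

Lemma hat_C0R del N k : 0 < del -> C0R (hat del N k).
Proof.
move=> del0; split=> [|e e0].
  have ramp_cont m : continuous (ramp del N m).
    exact: lipschitz_continuous (fun s t => ramp_dist N m s t del0).
  by move=> t; apply: cvgB; exact: ramp_cont.
exists (`|node del N k| + del) => t Nt; apply: le_lt_trans e0; rewrite normr_le0.
apply: contraLR Nt => /(hat_neq0 del0); rewrite -leNgt.
by have := ler_distD (node del N k) t 0; rewrite !subr0; lra.
Qed.

End hat_functions.

Section interpolation.
Variables (R : realType) (d : nat).
Implicit Types (f : 'rV[R]_d -> R) (x : 'rV[R]_d) (j : 'I_d).

Definition interp f j del N x : R :=
  \sum_(k < (2 * N).+1) f (row_upd x j (node del N k)) * hat del N k (x 0 j).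

Lemma interp_C0 f j del N : C0 f -> 0 < del -> C0 (interp f j del N).
Proof.
move=> Cf del0; apply: (@C0V_sum R 'rV[R]_d _
  (fun k x => f (row_upd x j (node del N k)) * hat del N k (x 0 j))) => k.
exact: C0_mul_coord j (node del N k) Cf (hat_C0R N k del0).
Qed.

Lemma interp_errorE f j del N x : f x - interp f j del N x =
  (1 - \sum_(k < (2 * N).+1) hat del N k (x 0 j)) * f x +
  \sum_(k < (2 * N).+1) hat del N k (x 0 j) * (f x - f (row_upd x j (node del N k))).
Proof.
have -> : \sum_(k < (2 * N).+1)
      hat del N k (x 0 j) * (f x - f (row_upd x j (node del N k))) =
    (\sum_(k < (2 * N).+1) hat del N k (x 0 j)) * f x - interp f j del N x.
  by rewrite mulr_suml -sumrB; apply: eq_bigr => k _; rewrite mulrBr [f _ * _]mulrC.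
by ring.
Qed.

Lemma interp_approx f j : C0 f -> forall eps : R, 0 < eps ->
  exists del N, 0 < del /\ forall x, `|f x - interp f j del N x| <= eps.
Proof.
move=> Cf eps eps0; have eps2 : 0 < eps / 2 by rewrite divr_gt0.
have [del del0 fdel] := C0V_unif_continuous (@closed_ball0_compact_rV R d) Cf eps2.
have [M fM] := Cf.2 _ eps2; pose N := (Num.truncn (`|M| / del)).+1.
have MN : `|M| < N%:R * del by rewrite -ltr_pdivrMr // truncnS_gt.
exists del, N; split=> // x; rewrite interp_errorE.
set s := \sum_(k < _) hat del N k (x 0 j).
have s01 : 0 <= s <= 1 by rewrite sum_hat_ge0 sum_hat_le1.
have near_nodes : `|\sum_(k < (2 * N).+1)
    hat del N k (x 0 j) * (f x - f (row_upd x j (node del N k)))| <= s * (eps / 2).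
  apply: le_trans (ler_norm_sum _ _ _) _; rewrite mulr_suml; apply: ler_sum => k _.
  rewrite normrM ger0_norm ?hat_ge0 //; have [->|hk] := eqVneq (hat del N k (x 0 j)) 0.
    by rewrite !mul0r.
  rewrite ler_wpM2l ?hat_ge0 // ltW // fdel // -{1}(row_upd_id x j).
  exact: le_lt_trans (row_upd_dist_coord _ _ _ _) (hat_neq0 del0 hk).
have far_out : `|(1 - s) * f x| <= eps / 2.
  have [xj|xj] := leP `|x 0 j| (N%:R * del).
    by rewrite /s sum_hat_eq1 // subrr mul0r normr0 ltW.
  have /fM fx : M < `|x| by have := normr_coord_le x j; have := ler_norm M; lra.
  by rewrite normrM ger0_norm; have := normr_ge0 (f x); nra.
by apply: le_trans (ler_normD _ _) _; nra.
Qed.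

End interpolation.

Section coordinate_operators.
Variables (R : realType) (d : nat).
Implicit Types (S T U : (R -> R) -> (R -> R)) (f : 'rV[R]_d -> R) (i j : 'I_d).

Lemma slice_coord (g : R -> R) j (x : 'rV[R]_d) : slice (fun y => g (y 0 j)) j x = g.
Proof. by apply: funext => t; rewrite sliceE row_upd_same. Qed.

Lemma slice_Vop T j f x : slice (Vop j T f) j x = T (slice f j x).
Proof. by apply: funext => t; rewrite sliceE /Vop row_upd_same slice_row_upd. Qed.

Lemma Vop_coord T j (g : R -> R) :
  Vop j T (fun y : 'rV[R]_d => g (y 0 j)) = fun y => T g (y 0 j).
Proof. by apply: funext => y; rewrite /Vop slice_coord. Qed.

Lemma Vop_row_upd_other S i j F : i != j -> (forall y t, F (row_upd y j t) = F y) ->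
  forall y t, Vop i S F (row_upd y j t) = Vop i S F y.
Proof.
move=> ij Fj y t; rewrite /Vop row_upd_other //; congr (S _ _).
by apply: funext => s; rewrite !sliceE -row_updC // Fj.
Qed.

Lemma Vop_sum T j n (b F : nat -> 'rV[R]_d -> R) : bdd_op (@C0R R) T ->
  (forall k y t, b k (row_upd y j t) = b k y) -> (forall k y, C0R (slice (F k) j y)) ->
  Vop j T (fun y => \sum_(k < n) b k y * F k y) =
  fun y => \sum_(k < n) b k y * Vop j T (F k) y.
Proof.
move=> bT bj CF; apply: funext => y; rewrite /Vop.
have /(congr1 (fun h => h (y 0 j))) <- := bdd_op_sum bT n (b^~ y) (CF^~ y).
by congr (T _ _); apply: funext => t; rewrite sliceE; apply: eq_bigr => k _; rewrite bj.
Qed.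

Lemma Vop_interp T f j del N : bdd_op (@C0R R) T -> 0 < del ->
  Vop j T (interp f j del N) =
  fun x => \sum_(k < (2 * N).+1) f (row_upd x j (node del N k)) * T (hat del N k) (x 0 j).
Proof.
move=> bT del0; rewrite /interp (@Vop_sum T j _
  (fun k y => f (row_upd y j (node del N k))) (fun k y => hat del N k (y 0 j))) //.
- by apply: funext => x; apply: eq_bigr => k _; rewrite Vop_coord.
- by move=> k y t; rewrite row_upd_upd.
- by move=> k y; rewrite slice_coord; exact: hat_C0R.
Qed.

Lemma Vop_lipschitz T : bdd_op (@C0R R) T -> exists2 C, 0 <= C & forall j f g (eta : R),
  C0 f -> C0 g -> (forall x, `|f x - g x| <= eta) ->
  forall x, `|Vop j T f x - Vop j T g x| <= C * eta.
Proof.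
move=> /bdd_op_lipschitz[C C0 TC]; exists C => // j f g eta Cf Cg fg x.
by apply: TC; [exact: slice_C0R | exact: slice_C0R | move=> t; exact: fg].
Qed.

Lemma Vop_C0 T j f : bdd_op (@C0R R) T -> C0 f -> C0 (Vop j T f).
Proof.
move=> bT Cf; apply: C0V_uniform_closed => eps eps0.
have [C C0 TC] := Vop_lipschitz bT; have C1 : 0 < C + 1 by lra.
have [del [N [del0 f_interp]]] := interp_approx j Cf (divr_gt0 eps0 C1).
exists (Vop j T (interp f j del N)) => [|x].
  rewrite Vop_interp //; apply: (@C0V_sum R 'rV[R]_d _
    (fun k x => f (row_upd x j (node del N k)) * T (hat del N k) (x 0 j))) => k.
  by apply: C0_mul_coord => //; case: bT => C0T _ _; exact/C0T/hat_C0R.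
apply: le_trans (TC _ _ _ _ Cf (interp_C0 j N Cf del0) f_interp x) _.
by rewrite mulrA ler_pdivrMr //; nra.
Qed.

Lemma Vop_bdd T j : bdd_op (@C0R R) T -> bdd_op (@C0 R d) (Vop j T).
Proof.
move=> bT; have [C C0 TC] := bdd_op_bound bT; case: (bT) => _ linT _; split.
- by move=> f; exact: Vop_C0.
- move=> a f g Cf Cg; apply: funext => x.
  have := linT a _ _ (slice_C0R j x Cf) (slice_C0R j x Cg).
  by move=> /(congr1 (fun h => h (x 0 j))).
- exists C => f Cf; apply: (supn_le 0) => x.
  apply: le_trans (TC _ (slice_C0R j x Cf) _) _.
  by rewrite ler_wpM2l // supn_slice_le.
Qed.

Lemma opnorm_Vop_le U j (C : R) : 0 <= C ->
  (forall g, C0R g -> forall t, `|U g t| <= C * supn g) ->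
  opnorm (@C0 R d) (Vop j U) <= opnorm (@C0R R) U.
Proof.
move=> C0 UC; have ub : has_ubound [set supn (U g) | g in [set g | C0R g /\ supn g <= 1]].
  exists C => _ [g [Cg g1] <-]; apply: (supn_le 0) => t.
  by apply: le_trans (UC _ Cg t) _; rewrite ler_piMr.
apply: ge_sup.
  exists (supn (Vop j U (fun=> 0))), (fun=> 0) => //.
  by split; [exact: C0V0 | apply: (supn_le 0) => x; rewrite normr0].
move=> _ [f [Cf f1] <-]; apply: (supn_le 0) => x; rewrite /Vop.
apply: le_trans (supn_ub (x 0 j) (UC _ (slice_C0R j x Cf))) _.
apply: (ub_le_sup ub).
exists (slice f j x) => //; split; first exact: slice_C0R.
exact: le_trans (supn_slice_le j x Cf) f1.
Qed.

Lemma Vop_comm_interp S T i j f del N : i != j ->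
  bdd_op (@C0R R) S -> bdd_op (@C0R R) T -> C0 f -> 0 < del ->
  Vop i S (Vop j T (interp f j del N)) = Vop j T (Vop i S (interp f j del N)).
Proof.
move=> ij bS bT Cf del0; pose F k y := f (row_upd y j (node del N k)).
have Fj k y t : F k (row_upd y j t) = F k y by rewrite /F row_upd_upd.
have CFi k y : C0R (slice (F k) i y).
  have -> : slice (F k) i y = slice f i (row_upd y j (node del N k)).
    by apply: funext => s; rewrite !sliceE /F row_updC.
  exact: slice_C0R.
have Vop_i (g : nat -> R -> R) :
    Vop i S (fun y => \sum_(k < (2 * N).+1) F k y * g k (y 0 j)) =
    fun y => \sum_(k < (2 * N).+1) Vop i S (F k) y * g k (y 0 j).
  under eq_fun do under eq_bigr do rewrite mulrC.
  rewrite (@Vop_sum S i _ (fun k y => g k (y 0 j)) F) //; last first.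
    by move=> k y s; rewrite row_upd_other // eq_sym.
  by apply: funext => y; apply: eq_bigr => k _; rewrite mulrC.
rewrite Vop_interp // (Vop_i (fun k => T (hat del N k))) /interp (Vop_i (hat del N)).
rewrite (@Vop_sum T j _ (fun k => Vop i S (F k)) (fun k y => hat del N k (y 0 j))) //.
- by apply: funext => y; apply: eq_bigr => k _; rewrite Vop_coord.
- by move=> k y t; apply: Vop_row_upd_other.
- by move=> k y; rewrite slice_coord; exact: hat_C0R.
Qed.

Lemma Vop_comm S T i j f : i != j -> bdd_op (@C0R R) S -> bdd_op (@C0R R) T -> C0 f ->
  Vop i S (Vop j T f) = Vop j T (Vop i S f).
Proof.
move=> ij bS bT Cf; apply: funext => x; apply/eqP; rewrite -subr_eq0 -normr_le0.
apply/ler_addgt0Pr => eps eps0; rewrite add0r.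
have [CS CS0 SC] := Vop_lipschitz bS; have [CT CT0 TC] := Vop_lipschitz bT.
have CST0 : 0 <= CS * CT by exact: mulr_ge0.
have K0 : 0 < 2 * CS * CT + 1 by rewrite -mulrA; lra.
have [del [N [del0 f_interp]]] := interp_approx j Cf (divr_gt0 eps0 K0).
set eta := eps / _ in f_interp; set g := interp f j del N in f_interp.
have Cg : C0 g := interp_C0 j N Cf del0.
have ST : `|Vop i S (Vop j T f) x - Vop i S (Vop j T g) x| <= CS * (CT * eta).
  by apply: SC; [exact: Vop_C0 | exact: Vop_C0 | move=> y; exact: TC].
have TS : `|Vop j T (Vop i S f) x - Vop j T (Vop i S g) x| <= CT * (CS * eta).
  by apply: TC; [exact: Vop_C0 | exact: Vop_C0 | move=> y; exact: SC].
rewrite /g Vop_comm_interp // -/g in ST.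
have eta_le : 2 * (CS * CT) * eta <= eps.
  have eta0 : 0 <= eta by rewrite divr_ge0 // ltW.
  have : eta * (2 * CS * CT + 1) = eps by rewrite divfK // gt_eqF.
  lra.
have := ler_distD (Vop j T (Vop i S g) x) (Vop i S (Vop j T f) x) (Vop j T (Vop i S f) x).
by rewrite distrC in TS; lra.
Qed.

End coordinate_operators.

Theorem lemma1p3p2 (R : realType) (d : nat) :
  (* (1) existence and uniqueness of the bounded operator T^j *)
  (forall (j : 'I_d) (T : (R -> R) -> (R -> R)), bdd_op (@C0R R) T ->
     exists U, [/\ bdd_op (@C0 R d) U,
        (forall f, @C0 R d f -> forall x, U f x = T (slice f j x) (x 0 j))
      & forall U', bdd_op (@C0 R d) U' ->
          (forall f, @C0 R d f -> forall x, U' f x = T (slice f j x) (x 0 j)) ->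
          op_eq (@C0 R d) U' U]) /\
  (* (2) V_j : T |-> T^j is a continuous algebra homomorphism *)
  (forall j : 'I_d,
     (forall S T, bdd_op (@C0R R) S -> bdd_op (@C0R R) T ->
        [/\ op_eq (@C0 R d) (Vop j (op_add S T)) (op_add (Vop j S) (Vop j T)),
            (forall a : R, op_eq (@C0 R d) (Vop j (op_scale a S)) (op_scale a (Vop j S)))
          & op_eq (@C0 R d) (Vop j (S \o T)) (Vop j S \o Vop j T)]) /\
     (forall T, bdd_op (@C0R R) T -> forall e : R, 0 < e ->
        exists2 delta : R, 0 < delta & forall S, bdd_op (@C0R R) S ->
          opnorm (@C0R R) (op_add S (op_opp T)) < delta ->
          opnorm (@C0 R d) (op_add (Vop j S) (op_opp (Vop j T))) < e)) /\
  (* (3) commutation for i <> j *)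
  (forall (i j : 'I_d) (S T : (R -> R) -> (R -> R)), i != j ->
     bdd_op (@C0R R) S -> bdd_op (@C0R R) T ->
     forall f, @C0 R d f -> Vop i S (Vop j T f) = Vop j T (Vop i S f)).
Proof.
split; [|split; [move=> j; split|]].
- move=> j T bT; exists (Vop j T); split=> [||U' _ U'E f Cf]; first exact: Vop_bdd.
    by [].
  by apply: funext => x; rewrite U'E.
- move=> S T _ _; split=> // f _.
  by apply: funext => x; rewrite /= [RHS]/Vop slice_Vop.
- move=> T bT e e0; exists e => // S bS; apply: le_lt_trans.
  have [CS CS0 SC] := bdd_op_bound bS; have [CT CT0 TC] := bdd_op_bound bT.
  apply: (@opnorm_Vop_le R d (op_add S (op_opp T)) j (CS + CT)) => [|g Cg t].
    exact: addr_ge0.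
  apply: le_trans (ler_normD _ _) _; rewrite normrN mulrDl.
  exact: lerD (SC _ Cg t) (TC _ Cg t).
- move=> i j S T ij bS bT f Cf; exact: Vop_comm.
Qed.
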